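(* Let $w$ be a weight on $\mathbb{N}_0$ satisfying the discrete Pearson equation $\theta(k+1)w(k+1)=\sigma(k)w(k)$ for all $k\in\mathbb{N}_0$, with $\theta,\sigma$ polynomials and $\theta(0)=0$, and with the setting of the context. Then for all $z\in\mathbb{C}\setminus\mathbb{Z}$, $$\theta(z)Q(z)-\Psi^\top H^{-1}Q(z-1)=\sum_{k=0}^\infty P(k)\frac{\theta(z)-\theta(k)}{z-k}w(k),$$ $$\sigma(z)Q(z)-\Psi H^{-1}Q(z+1)=\sum_{k=0}^\infty P(k)\frac{\sigma(z)-\sigma(k)}{z-k}w(k).$$
   Context: The weight $w$ takes values $w(k)$ at $k\in\mathbb{N}_0$ with $\sum_kk^n|w(k)|<\infty$ for all $n$; moments $\rho_n=\sum_kk^nw(k)$, moment matrix $G=(\rho_{n+m})_{n,m\ge0}$ with all leading principal minors nonzero, so $G=S^{-1}HS^{-\top}$ with $S$ lower unitriangular and $H=\operatorname{diag}(H_0,H_1,\dots)$. $P(z)=S\chi(z)$, $\chi(z)=(1,z,z^2,\dots)^\top$, is the vector of monic orthogonal polynomials $P_n$ (with $\sum_kP_n(k)P_m(k)w(k)=\delta_{n,m}H_n$), and $Q(z)$ is the vector of second kind functions $Q_n(z)=\sum_{k=0}^\infty\frac{P_n(k)w(k)}{z-k}$. $\Lambda$ is the shift matrix (ones on the first superdiagonal), $J=S\Lambda S^{-1}$ the Jacobi matrix, $B$ the lower Pascal matrix $B_{n,m}=\binom nm$, $\Pi:=SBS^{-1}$ (so $P(z+1)=\Pi P(z)$). The Laguerre--Freud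 structure matrix is $\Psi:=\Pi^{-1}\theta(J)H$; under the Pearson equation it is known that also $\Psi=H\sigma(J^\top)\Pi^\top$, and $\Psi$ is banded. *)

(* Complex numbers: C R := (R[i])^o for
   R : realType (the ^o copy carries the normed/topological structure so that
   series and limits make sense). *)
From mathcomp Require Import all_boot all_order all_algebra.
From mathcomp Require Import all_classical all_reals all_analysis.
From mathcomp Require Import complex.
Import Order.TTheory GRing.Theory Num.Theory numFieldNormedType.Exports.

Set Implicit Arguments.
Unset Strict Implicit.
Unset Printing Implicit Defensive.

Local Open Scope ring_scope.

Notation C R := ((R[i])^o).

Section Defs.
Variable R : realType.

Definition mx := nat -> nat -> C R.
Definition vc := nat -> C R.

Definition csum (u : nat -> C R) : C R := limn (series u).

Definition mmul (A B : mx) : mx := fun n m => csum (fun k => A n k * B k m).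
Definition mvmul (A : mx) (v : vc) : vc := fun n => csum (fun k => A n k * v k).
Definition mtr (A : mx) : mx := fun n m => A m n.
Definition idm : mx := fun n m => (n == m)%:R.
Definition diagm (d : nat -> C R) : mx := fun n m => if n == m then d n else 0.
Definition shiftm : mx := fun n m => (m == n.+1)%:R.
Definition pascal : mx := fun n m => ('C(n, m))%:R.
Definition mpow (A : mx) (i : nat) : mx := iter i (mmul A) idm.
Definition mhorner (p : {poly C R}) (A : mx) : mx :=
  fun n m => \sum_(i < size p) p`_i * mpow A i n m.
(* inverse of a lower triangular infinite matrix (with invertible diagonal):
   its entries are those of the inverse of any finite leading truncation
   containing them *)
Definition lowinv (A : mx) : mx := fun n m =>
  let N := (maxn n m).+1 in
  (invmx (\matrix_(i < N, j < N) A i j)) (inord n) (inord m).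

Definition chi (z : C R) : vc := fun k => z ^+ k.

Section Weight.
Variables (w : nat -> C R) (S : mx) (Hd : nat -> C R).

Definition moment (n : nat) : C R := csum (fun k => (k%:R) ^+ n * w k).
Definition momentmx : mx := fun n m => moment (n + m).

Definition Pvec (z : C R) : vc := mvmul S (chi z).
Definition Qvec (z : C R) : vc :=
  fun n => csum (fun k => Pvec k%:R n * w k / (z - k%:R)).

Definition Hmx : mx := diagm Hd.
Definition Hinvmx : mx := diagm (fun n => (Hd n)^-1).
Definition Jacobi : mx := mmul (mmul S shiftm) (lowinv S).
Definition Pimx : mx := mmul (mmul S pascal) (lowinv S).
Definition Psi (theta : {poly C R}) : mx :=
  mmul (mmul (lowinv Pimx) (mhorner theta Jacobi)) Hmx.

End Weight.
End Defs.

From mathcomp Require Import all_boot all_order all_algebra.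
From mathcomp Require Import all_classical all_reals all_analysis.
From mathcomp Require Import complex.
From mathcomp Require Import ring.
Import Order.TTheory GRing.Theory Num.Theory numFieldNormedType.Exports.

(* Since P(x) = S chi(x), one has J P(x) = x P(x) and Pi P(x) = P(x + 1), hence
   Pi^-1 theta(J) P(x) = theta(x) P(x - 1); and Psi H^-1 = Pi^-1 theta(J).  Orthogonality
   identifies Psi_{kn} / H_k with the k-th coordinate, in the basis P, of the polynomial
   sigma(x) P_n(x + 1) (this uses the Pearson equation once), so that
   Psi^T H^-1 P(x) = sigma(x) P(x + 1).  Every matrix involved is banded, so for such a
   matrix A the n-th entry of A Q(z) is sum_k (A P(k))_n w(k) / (z - k).  The Pearson
   equation with theta(0) = 0 is the summation by parts
   sum_k theta(k) w(k) F(k) = sum_k sigma(k) w(k) F(k + 1), which turns both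
   (Psi^T H^-1 Q(z - 1))_n and (Psi H^-1 Q(z + 1))_n into series of the form
   sum_k p(k) P_n(k) w(k) / (z - k); subtracting them from p(z) Q_n(z) (p = theta, sigma)
   leaves the divided differences (p(z) - p(k)) / (z - k).  Convergence of all series
   follows from the finiteness of the absolute moments of w. *)

Set Implicit Arguments.
Unset Strict Implicit.
Unset Printing Implicit Defensive.

Local Open Scope classical_set_scope.
Local Open Scope ring_scope.

Lemma sum_ord_trunc (V : nmodType) (F : nat -> V) M N : (M <= N)%N ->
  (forall k, (M <= k)%N -> F k = 0) -> \sum_(k < N) F k = \sum_(k < M) F k.
Proof.
move=> MN F0; rewrite -(subnKC MN) big_split_ord /= [X in _ + X]big1 ?addr0 //.
by move=> k _; apply: F0; exact: leq_addr.
Qed.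

Lemma sum_ord_delta (V : pzSemiRingType) (f : nat -> V) n N : (n < N)%N ->
  \sum_(k < N) (n == k :> nat)%:R * f k = f n.
Proof.
move=> nN; rewrite (bigD1 (Ordinal nN)) //= eqxx mul1r big1 ?addr0 // => k.
by rewrite -val_eqE /= eq_sym => /negbTE ->; rewrite mul0r.
Qed.

Section ComplexSeries.
Variable R : realType.
Local Notation K := (C R).
Implicit Types u v : nat -> K.

Lemma cvg_series_trunc u N : (forall k, (N <= k)%N -> u k = 0) ->
  series u @ \oo --> \sum_(k < N) u k.
Proof.
move=> u0; apply: cvg_near_cst; exists N => // n /= Nn.
by rewrite seriesEord /=; apply: sum_ord_trunc.
Qed.

Lemma csum_trunc u N : (forall k, (N <= k)%N -> u k = 0) ->
  csum u = \sum_(k < N) u k.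
Proof. by move=> u0; apply: cvg_lim => //; exact: cvg_series_trunc. Qed.

Lemma eq_is_cvg_series u v : cvgn (series u) -> u =1 v -> cvgn (series v).
Proof. by move=> + /funext uv; rewrite uv. Qed.

Lemma csumZ c u : cvgn (series u) -> csum (fun k => c * u k) = c * csum u.
Proof. exact: lim_seriesZ. Qed.

Lemma csumD u v : cvgn (series u) -> cvgn (series v) ->
  csum (fun k => u k + v k) = csum u + csum v.
Proof. exact: lim_seriesD. Qed.

Lemma csumB u v : cvgn (series u) -> cvgn (series v) ->
  csum (fun k => u k - v k) = csum u - csum v.
Proof. exact: lim_seriesB. Qed.

Lemma is_cvg_series_lincomb D (c : nat -> K) (F : nat -> nat -> K) :
  (forall i, (i < D)%N -> cvgn (series (F i))) ->
  cvgn (series (fun k => \sum_(i < D) c i * F i k)).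
Proof.
elim: D => [|d IH] cvgF.
  by apply: cvgP; apply: (@cvg_series_trunc _ 0) => k _; rewrite big_ord0.
under eq_fun do rewrite big_ord_recr /=.
apply: is_cvg_seriesD; first by apply: IH => i /ltnW; exact: cvgF.
exact/is_cvg_seriesZ/cvgF.
Qed.

Lemma csum_lincomb D (c : nat -> K) (F : nat -> nat -> K) :
  (forall i, (i < D)%N -> cvgn (series (F i))) ->
  csum (fun k => \sum_(i < D) c i * F i k) = \sum_(i < D) c i * csum (F i).
Proof.
elim: D => [|d IH] cvgF.
  by rewrite big_ord0 (@csum_trunc _ 0) ?big_ord0 // => k _; rewrite big_ord0.
under eq_fun do rewrite big_ord_recr /=.
rewrite big_ord_recr /= -IH => [|i /ltnW]; last exact: cvgF.
rewrite -(csumZ (c d)); last exact: cvgF.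
apply: csumD; last exact/is_cvg_seriesZ/cvgF.
by apply: is_cvg_series_lincomb => i /ltnW; exact: cvgF.
Qed.

Lemma csumS u : cvgn (series (fun k => u k.+1)) ->
  csum u = u 0%N + csum (fun k => u k.+1).
Proof.
move=> /cvg_ex[l ul].
have uS : series u @ \oo --> u 0%N + l.
  rewrite -cvg_shiftS.
  have -> : (fun n => series u n.+1) = (fun n => u 0%N + series (fun k => u k.+1) n).
    by apply: funext => n; rewrite /series /= big_nat_recl.
  by apply: cvgD; [exact: cvg_cst | exact: ul].
by rewrite /csum (cvg_lim _ uS) // (cvg_lim _ ul).
Qed.

Local Notation Re := complex.Re.
Local Notation Im := complex.Im.

Lemma normc_ge_Re (x : K) : (`|Re x|)%:C%C <= `|x|.
Proof.
rewrite normc_def lecR -sqrtr_sqr ler_sqrt; last by rewrite addr_ge0 // sqr_ge0.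
by rewrite lerDl sqr_ge0.
Qed.

Lemma normc_ge_Im (x : K) : (`|Im x|)%:C%C <= `|x|.
Proof.
rewrite normc_def lecR -sqrtr_sqr ler_sqrt; last by rewrite addr_ge0 // sqr_ge0.
by rewrite lerDr sqr_ge0.
Qed.

Lemma normc_le_ReIm (x : K) : `|x| <= (`|Re x| + `|Im x|)%:C%C.
Proof.
rewrite normc_def lecR -[X in _ <= X]ger0_norm ?addr_ge0 //.
rewrite -sqrtr_sqr ler_sqrt ?sqr_ge0 // sqrrD !real_normK ?num_real //.
by rewrite -addrA lerD2l lerDr mulrn_wge0 // mulr_ge0.
Qed.

Lemma cvg_Re u (l : K) : u @ \oo --> l -> (fun n => Re (u n)) @ \oo --> Re l.
Proof.
move=> /cvgrPdist_lt ul; apply/cvgrPdist_lt => e e0.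
apply: filterS (ul e%:C%C _); last by rewrite ltcR.
move=> n /=; rewrite -ltcR; apply: le_lt_trans; rewrite -raddfB; exact: normc_ge_Re.
Qed.

Lemma cvg_ReIm u (a b : R) : (fun n => Re (u n)) @ \oo --> a ->
  (fun n => Im (u n)) @ \oo --> b -> u @ \oo --> ((a +i* b)%C : K).
Proof.
move=> /cvgrPdist_lt ua /cvgrPdist_lt ub; apply/cvgrPdist_lt => e.
rewrite ltcE /= => /andP[/eqP Ime Ree].
have -> : e = (Re e)%:C%C by case: e Ime Ree => ? ? /= ->.
near=> n; apply: le_lt_trans (normc_le_ReIm _) _.
rewrite ltcR [X in _ < X](splitr (Re e)) !raddfB /=.
by apply: ltrD; near: n; [apply: ua | apply: ub]; rewrite divr_gt0.
Unshelve. all: by end_near.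
Qed.

Lemma is_cvg_series_normr_le (a b : nat -> R) :
  cvgn (series b) -> (forall k, `|a k| <= b k) -> cvgn (series a).
Proof.
move=> cvgb ab; apply: normed_cvg; apply: series_le_cvg cvgb => k /=.
- exact: normr_ge0.
- exact: le_trans (normr_ge0 _) (ab k).
- exact: ab.
Qed.

Lemma series_Re u : series (fun k => Re (u k)) = (fun n => Re (series u n)).
Proof. by apply: funext => n; rewrite /series /= raddf_sum. Qed.

Lemma series_Im u : series (fun k => Im (u k)) = (fun n => Im (series u n)).
Proof. by apply: funext => n; rewrite /series /= raddf_sum. Qed.

Lemma is_cvg_series_normc_le u v :
  cvgn (series v) -> (forall k, `|u k| <= v k) -> cvgn (series u).
Proof.
move=> /cvg_ex[l vl] uv.
have vRe k : v k = (Re (v k))%:C%C.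
  by move: (le_trans (normr_ge0 _) (uv k)); case: (v k) => ? ? /ger0_Im /= ->.
have cvgRev : cvgn (series (fun k => Re (v k))).
  by apply/cvg_ex; exists (Re l); rewrite series_Re; exact: cvg_Re.
have /cvg_ex[a ua] : cvgn (series (fun k => Re (u k))).
  apply: is_cvg_series_normr_le cvgRev _ => k.
  by rewrite -lecR -vRe; apply: le_trans (uv k); exact: normc_ge_Re.
have /cvg_ex[b ub] : cvgn (series (fun k => Im (u k))).
  apply: is_cvg_series_normr_le cvgRev _ => k.
  by rewrite -lecR -vRe; apply: le_trans (uv k); exact: normc_ge_Im.
apply/cvg_ex; exists ((a +i* b)%C : K).
by apply: cvg_ReIm; [rewrite -series_Re | rewrite -series_Im].
Qed.

End ComplexSeries.

Section WeightedSeries.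
Variables (R : realType) (w : nat -> C R).
Local Notation K := (C R).
Hypothesis hsum : forall n : nat, cvgn (series (fun k : nat => (k%:R ^+ n * `|w k|) : K)).

Lemma is_cvg_series_poly_weight (q : {poly K}) (g : nat -> K) (M : K) :
  (forall k, `|g k| <= M) -> cvgn (series (fun k => q.[k%:R] * w k * g k)).
Proof.
move=> gM.
have -> : (fun k => q.[k%:R] * w k * g k) =
    (fun k => \sum_(i < size q) q`_i * (k%:R ^+ i * w k * g k)).
  apply: funext => k; rewrite horner_coef !mulr_suml.
  by apply: eq_bigr => i _; rewrite !mulrA.
apply: (is_cvg_series_lincomb (F := fun i k => k%:R ^+ i * w k * g k)) => i _.
apply: (@is_cvg_series_normc_le _ _ (fun k => M * (k%:R ^+ i * `|w k|))).
  exact: (is_cvg_seriesZ (k := M) (@hsum i)).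
move=> k; rewrite !normrM normrX normr_nat mulrC.
by apply: ler_wpM2r; [rewrite mulr_ge0 // exprn_ge0 | exact: gM].
Qed.

Lemma bounded_inv_sub_nat (c : K) :
  exists M : K, forall k : nat, `|(c - k%:R)^-1| <= M.
Proof.
pose r := Num.sqrt (complex.Re c ^+ 2 + complex.Im c ^+ 2).
have [N0 far] : exists N0, forall k, (N0 <= k)%N -> `|(c - k%:R)^-1| <= 1.
  exists (Num.bound (r + 1)) => k Nk.
  have c_k : 1 <= `|c - k%:R|.
    rewrite distrC; apply: le_trans (lerB_dist _ _).
    rewrite normr_nat normc_def -/r.
    have -> : (k%:R : K) = (k%:R : R)%:C%C by rewrite rmorph_nat.
    rewrite -[1 : K]/((1 : R)%:C%C) -rmorphB lecR.
    rewrite lerBrDr addrC; apply: le_trans (ltW (archi_boundP _)) _.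
      by rewrite addr_ge0 ?sqrtr_ge0.
    by rewrite ler_nat.
  by rewrite normfV invf_le1 // (lt_le_trans ltr01 c_k).
exists (1 + \sum_(k < N0) `|(c - k%:R)^-1|) => k.
have sum_ge0 : 0 <= \sum_(k < N0) `|(c - k%:R)^-1| by apply: sumr_ge0.
have [kN|Nk] := ltnP k N0; last by apply: le_trans (far k Nk) _; rewrite lerDl.
apply: ler_wpDl => //.
by rewrite (bigD1 (Ordinal kN)) //= lerDl sumr_ge0.
Qed.

Lemma is_cvg_series_poly (q : {poly K}) : cvgn (series (fun k => q.[k%:R] * w k)).
Proof.
have one_le1 (k : nat) : `|(1 : K)| <= 1 by rewrite normr1.
have := is_cvg_series_poly_weight (q := q) one_le1.
by under eq_fun do rewrite mulr1.
Qed.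

Lemma is_cvg_series_poly_div (q : {poly K}) (c : K) :
  cvgn (series (fun k => q.[k%:R] * w k / (c - k%:R))).
Proof. by have [M cM] := bounded_inv_sub_nat c; exact: is_cvg_series_poly_weight cM. Qed.

End WeightedSeries.

Section BandedMatrices.
Variable R : realType.
Local Notation K := (C R).
Implicit Types (A B : mx R) (v : vc R).

Definition upper_banded (b : nat) A := forall n m, (n + b < m)%N -> A n m = 0.

Lemma mmul_banded b N A B n m : upper_banded b A -> (n + b < N)%N ->
  mmul A B n m = \sum_(k < N) A n k * B k m.
Proof.
move=> Ab bN; apply: csum_trunc => k Nk.
by rewrite Ab ?mul0r //; exact: leq_trans bN Nk.
Qed.

Lemma mvmul_banded b N A v n : upper_banded b A -> (n + b < N)%N ->
  mvmul A v n = \sum_(k < N) A n k * v k.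
Proof.
move=> Ab bN; apply: csum_trunc => k Nk.
by rewrite Ab ?mul0r //; exact: leq_trans bN Nk.
Qed.

Lemma mmul_diagmr A d n m : mmul A (diagm d) n m = A n m * d m.
Proof.
rewrite /mmul (@csum_trunc _ _ m.+1) => [|k mk]; last by rewrite /diagm gtn_eqF ?mulr0.
rewrite big_ord_recr /= big1 ?add0r => [|k _]; first by rewrite /diagm eqxx.
by rewrite /diagm ltn_eqF ?mulr0.
Qed.

Lemma upper_banded_mmul a b A B : upper_banded a A -> upper_banded b B ->
  upper_banded (a + b) (mmul A B).
Proof.
move=> Aa Bb n m abm; rewrite (mmul_banded _ _ Aa (ltnSn _)) big1 // => k _.
rewrite Bb ?mulr0 //; apply: leq_ltn_trans abm.
by rewrite addnA leq_add2r -ltnS.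
Qed.

Lemma mvmul_mmul a b A B v n : upper_banded a A -> upper_banded b B ->
  mvmul (mmul A B) v n = mvmul A (mvmul B v) n.
Proof.
move=> Aa Bb; set N := (n + a + b).+1.
rewrite (mvmul_banded _ (upper_banded_mmul Aa Bb) (N := N)) ?addnA //.
rewrite (mvmul_banded _ Aa (N := N)) ?ltnS ?leq_addr //.
under eq_bigr => k _ do
  rewrite (mmul_banded _ _ Aa (N := N)) ?ltnS ?leq_addr // mulr_suml.
rewrite exchange_big /=; apply: eq_bigr => j _.
have [jna|naj] := leqP j (n + a); last first.
  by rewrite Aa // mul0r big1 // => k _; rewrite !mul0r.
rewrite (mvmul_banded _ Bb (n := j) (N := N)) ?ltnS ?leq_add2r // mulr_sumr.
by apply: eq_bigr => k _; rewrite mulrA.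
Qed.

Lemma upper_banded_idm : upper_banded 0 (@idm R).
Proof. by move=> n m; rewrite addn0 /idm => /ltn_eqF ->. Qed.

Lemma mvmul_idm v n : mvmul (@idm R) v n = v n.
Proof.
by rewrite (mvmul_banded _ upper_banded_idm (N := n.+1)) ?addn0 // sum_ord_delta.
Qed.

Lemma mvmulZr b A c v n : upper_banded b A ->
  mvmul A (fun k => c * v k) n = c * mvmul A v n.
Proof.
move=> Ab; rewrite !(mvmul_banded _ Ab (ltnSn _)) mulr_sumr.
by apply: eq_bigr => k _; rewrite mulrCA.
Qed.

Lemma upper_banded_mpow A i : upper_banded 1 A -> upper_banded i (mpow A i).
Proof.
move=> A1; elim: i => [|i IH]; first exact: upper_banded_idm.
by rewrite /mpow iterS -add1n; exact: upper_banded_mmul.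
Qed.

Lemma upper_banded_mhorner (p : {poly K}) A : upper_banded 1 A ->
  upper_banded (size p) (mhorner p A).
Proof.
move=> A1 n m pm; rewrite /mhorner big1 // => i _.
rewrite (upper_banded_mpow A1) ?mulr0 //.
by apply: leq_ltn_trans pm; rewrite leq_add2l ltnW.
Qed.

Lemma mvmul_mhorner_eigen (p : {poly K}) A v (x : K) : upper_banded 1 A ->
  (forall n, mvmul A v n = x * v n) -> forall n, mvmul (mhorner p A) v n = p.[x] * v n.
Proof.
move=> A1 Av.
have Apow i n : mvmul (mpow A i) v n = x ^+ i * v n.
  elim: i n => [|i IH] n; first by rewrite mvmul_idm mul1r.
  rewrite /mpow iterS (mvmul_mmul _ _ A1 (upper_banded_mpow (i := i) A1)).
  rewrite (_ : mvmul _ v = fun k => x ^+ i * v k); last exact: funext.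
  by rewrite (mvmulZr _ _ _ A1) Av exprS mulrCA !mulrA.
move=> n; set N := (n + size p).+1.
rewrite (mvmul_banded _ (upper_banded_mhorner (p := p) A1) (N := N)) // /mhorner.
under eq_bigr => k _ do rewrite mulr_suml.
rewrite exchange_big horner_coef mulr_suml /=; apply: eq_bigr => i _.
rewrite -mulrA -Apow (mvmul_banded _ (upper_banded_mpow (i := i) A1) (N := N)).
  by rewrite mulr_sumr; apply: eq_bigr => k _; rewrite mulrA.
by rewrite ltnS leq_add2l ltnW.
Qed.

Lemma upper_banded_shiftm : upper_banded 1 (@shiftm R).
Proof. by move=> n m; rewrite addn1 /shiftm => /gtn_eqF ->. Qed.

Lemma upper_banded_pascal : upper_banded 0 (@pascal R).
Proof. by move=> n m; rewrite addn0 /pascal => /bin_small ->. Qed.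

Lemma shiftm_chi (x : K) j : mvmul (@shiftm R) (chi x) j = x * chi x j.
Proof.
rewrite (mvmul_banded _ upper_banded_shiftm (N := j.+2)) ?addn1 // /shiftm.
by under eq_bigr => k _ do rewrite eq_sym; rewrite sum_ord_delta // /chi exprS.
Qed.

Lemma pascal_chi (x : K) j : mvmul (@pascal R) (chi x) j = chi (x + 1) j.
Proof.
rewrite (mvmul_banded _ upper_banded_pascal (N := j.+1)) ?addn0 // /chi exprD1n.
by apply: eq_bigr => k _; rewrite /pascal mulr_natl.
Qed.

End BandedMatrices.

Section LowerInverse.
Variable R : realType.
Local Notation K := (C R).
Implicit Types A : mx R.

Definition unitriangular A := upper_banded 0 A /\ forall n, A n n = 1.

Definition trunc N A : 'M[K]_N := \matrix_(i < N, j < N) A i j.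

Lemma trunc_unitmx N A : unitriangular A -> trunc N A \in unitmx.
Proof.
move=> [A0 A1]; rewrite unitmxE det_trig.
  by rewrite big1 ?unitr1 // => i _; rewrite mxE A1.
by apply/is_trig_mxP => i j ij; rewrite mxE A0 // addn0.
Qed.

Lemma unitriangular_mmul A B : unitriangular A -> unitriangular B ->
  unitriangular (mmul A B).
Proof.
move=> [A0 A1] [B0 B1]; split=> [|n]; first exact: upper_banded_mmul A0 B0.
rewrite (mmul_banded _ _ A0 (N := n.+1)) ?addn0 // big_ord_recr /= A1 B1 mul1r.
by rewrite big1 ?add0r // => k _; rewrite B0 ?mulr0 // addn0.
Qed.

Lemma unitriangular_pascal : unitriangular (@pascal R).
Proof. by split=> [|n]; [exact: upper_banded_pascal | rewrite /pascal binn]. Qed.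

Lemma lowinv_trunc N A n m : unitriangular A -> (n < N.+1)%N -> (m < N.+1)%N ->
  lowinv A n m = invmx (trunc N.+1 A) (inord n) (inord m).
Proof.
move=> hA nN mN; set M := (maxn n m).+1.
have MN : (M <= N.+1)%N by rewrite gtn_max nN mN.
set X := invmx (trunc N.+1 A).
pose Y : 'M[K]_M := \matrix_(i, j) X (widen_ord MN i) (widen_ord MN j).
have TY : trunc M A *m Y = 1%:M.
  apply/matrixP => i j; rewrite !mxE.
  have := mulmxV (trunc_unitmx N.+1 hA).
  move/(congr1 (fun Z : 'M[K]_N.+1 => Z (widen_ord MN i) (widen_ord MN j))).
  rewrite !mxE -val_eqE /= => <-.
  transitivity (\sum_(k < N.+1) A i k * X (inord k) (widen_ord MN j)); last first.
    by apply: eq_bigr => k _; rewrite !mxE inord_val.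
  rewrite (sum_ord_trunc (F := fun k => A i k * X (inord k) (widen_ord MN j)) MN).
    apply: eq_bigr => k _; rewrite !mxE; congr (_ * X _ _).
    by apply: val_inj; rewrite /= inordK // (leq_trans (ltn_ord k) MN).
  by move=> k Mk; rewrite (proj1 hA) ?mul0r // addn0 (leq_trans (ltn_ord i)).
have invY : invmx (trunc M A) = Y.
  by have := mulKmx (trunc_unitmx M hA) Y; rewrite TY mulmx1.
rewrite /lowinv -/M -/(trunc M A) invY mxE; congr (X _ _).
all: by apply: val_inj; rewrite /= !inordK // ltnS ?leq_maxl ?leq_maxr.
Qed.

Lemma lowinv_mulr N A n m : unitriangular A -> (n < N.+1)%N -> (m < N.+1)%N ->
  \sum_(k < N.+1) A n k * lowinv A k m = (n == m)%:R.
Proof.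
move=> hA nN mN.
have := congr1 (fun Z : 'M[K]_N.+1 => Z (inord n) (inord m)) (mulmxV (trunc_unitmx N.+1 hA)).
rewrite !mxE -val_eqE /= !inordK // => <-; apply: eq_bigr => k _.
by rewrite mxE inordK // (lowinv_trunc hA (ltn_ord k) mN) inord_val.
Qed.

Lemma lowinv_mull N A n m : unitriangular A -> (n < N.+1)%N -> (m < N.+1)%N ->
  \sum_(k < N.+1) lowinv A n k * A k m = (n == m)%:R.
Proof.
move=> hA nN mN.
have := congr1 (fun Z : 'M[K]_N.+1 => Z (inord n) (inord m)) (mulVmx (trunc_unitmx N.+1 hA)).
rewrite !mxE -val_eqE /= !inordK // => <-; apply: eq_bigr => k _.
by rewrite [in RHS]mxE inordK // (lowinv_trunc hA nN (ltn_ord k)) inord_val.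
Qed.

Lemma upper_banded_lowinv A : unitriangular A -> upper_banded 0 (lowinv A).
Proof.
move=> hA n m; rewrite addn0; elim/ltn_ind: n => n IH nm.
have := lowinv_mulr hA (ltnW nm) (ltnSn m).
rewrite (ltn_eqF nm) (sum_ord_trunc (F := fun k => A n k * lowinv A k m) (leqW nm)).
  2: by move=> k nk; rewrite (proj1 hA) ?mul0r // addn0.
rewrite big_ord_recr /= big1 ?add0r ?(proj2 hA) ?mul1r // => k _.
by rewrite IH ?mulr0 // (ltn_trans (ltn_ord k)).
Qed.

Lemma lowinv_diag A n : unitriangular A -> lowinv A n n = 1.
Proof.
move=> hA; have := lowinv_mulr hA (ltnSn n) (ltnSn n).
rewrite eqxx big_ord_recr /= big1 ?add0r ?(proj2 hA) ?mul1r // => k _.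
by rewrite (upper_banded_lowinv hA) ?mulr0 // addn0.
Qed.

Lemma unitriangular_lowinv A : unitriangular A -> unitriangular (lowinv A).
Proof. by move=> hA; split=> [|n]; [exact: upper_banded_lowinv | exact: lowinv_diag]. Qed.

Lemma mmul_lowinv_l A : unitriangular A -> mmul (lowinv A) A = @idm R.
Proof.
move=> hA; apply: funext => n; apply: funext => m.
rewrite (mmul_banded _ _ (upper_banded_lowinv hA) (N := (maxn n m).+1)).
  by apply: lowinv_mull; rewrite // ltnS ?leq_maxl ?leq_maxr.
by rewrite addn0 ltnS leq_maxl.
Qed.

End LowerInverse.

Section OrthogonalPolynomials.
Variables (R : realType) (S : mx R).
Local Notation K := (C R).
Hypothesis hSdiag : forall n, S n n = 1.
Hypothesis hSlow : forall n m, (n < m)%N -> S n m = 0.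

Local Notation P := (Pvec S).
Local Notation Sinv := (lowinv S).

Lemma unitriangular_S : unitriangular S.
Proof. by split=> // n m; rewrite addn0; exact: hSlow. Qed.

Lemma Pvec_sum x n N : (n < N)%N -> P x n = \sum_(k < N) S n k * x ^+ k.
Proof. by move=> nN; apply: (mvmul_banded _ (proj1 unitriangular_S)); rewrite addn0. Qed.

Definition Ppoly n : {poly K} := \poly_(k < n.+1) S n k.

Lemma horner_Ppoly n x : (Ppoly n).[x] = P x n.
Proof. by rewrite horner_poly (Pvec_sum x (ltnSn n)). Qed.

Lemma size_Ppoly n : (size (Ppoly n) <= n.+1)%N.
Proof. exact: size_poly. Qed.

Lemma lowinv_S_Pvec x : mvmul Sinv (P x) = chi x.
Proof.
apply: funext => m; rewrite (mvmul_banded _ (upper_banded_lowinv unitriangular_S) (N := m.+1)).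
  2: by rewrite addn0.
under eq_bigr => k _ do rewrite (Pvec_sum x (ltn_ord k)) mulr_sumr.
rewrite exchange_big /= -[RHS](sum_ord_delta (fun j => x ^+ j) (ltnSn m)).
apply: eq_bigr => j _; rewrite -(lowinv_mull unitriangular_S (ltnSn m) (ltn_ord j)).
by rewrite mulr_suml; apply: eq_bigr => k _; rewrite mulrA.
Qed.

Definition coordP (q : {poly K}) k := \sum_(m < size q) q`_m * Sinv m k.

Lemma coordP_eq0 (q : {poly K}) k : (size q <= k)%N -> coordP q k = 0.
Proof.
move=> qk; apply: big1 => m _.
by rewrite (upper_banded_lowinv unitriangular_S) ?mulr0 // addn0 (leq_trans (ltn_ord m)).
Qed.

Lemma horner_coordP (q : {poly K}) x N : (size q <= N)%N ->
  q.[x] = \sum_(k < N) coordP q k * P x k.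
Proof.
move=> qN; rewrite horner_coef.
have Sinv0 := upper_banded_lowinv unitriangular_S.
under eq_bigr => m _ do rewrite -[x ^+ m]/(chi x m) -lowinv_S_Pvec
  (mvmul_banded _ Sinv0 (N := N)) ?addn0 ?(leq_trans (ltn_ord m)) // mulr_sumr.
rewrite exchange_big /=; apply: eq_bigr => k _.
by rewrite /coordP mulr_suml; apply: eq_bigr => m _; rewrite mulrA.
Qed.

Lemma coordP_Ppoly n k : coordP (Ppoly n) k = (n == k)%:R.
Proof.
have coef m : (Ppoly n)`_m = S n m.
  by rewrite coef_poly; case: ltnP => // /hSlow ->.
rewrite /coordP.
rewrite -(sum_ord_trunc (F := fun m => (Ppoly n)`_m * Sinv m k) (N := (maxn n k).+1)).
- under eq_bigr => m _ do rewrite coef.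
  by apply: lowinv_mulr; rewrite ?ltnS ?leq_maxl ?leq_maxr //; exact: unitriangular_S.
- by apply: leq_trans (size_Ppoly n) _; rewrite ltnS leq_maxl.
by move=> m /(nth_default 0) ->; rewrite mul0r.
Qed.

Lemma upper_banded_Jacobi : upper_banded 1 (Jacobi S).
Proof.
have SL1 := upper_banded_mmul (proj1 unitriangular_S) (upper_banded_shiftm R).
by have := upper_banded_mmul SL1 (upper_banded_lowinv unitriangular_S); rewrite addn0.
Qed.

Lemma Jacobi_Pvec x n : mvmul (Jacobi S) (P x) n = x * P x n.
Proof.
have S0 := proj1 unitriangular_S.
have SL1 := upper_banded_mmul S0 (upper_banded_shiftm R).
rewrite (mvmul_mmul _ _ SL1 (upper_banded_lowinv unitriangular_S)) lowinv_S_Pvec.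
rewrite (mvmul_mmul _ _ S0 (upper_banded_shiftm R)).
rewrite (_ : mvmul _ (chi x) = fun j => x * chi x j); last exact/funext/shiftm_chi.
exact: mvmulZr _ _ _ S0.
Qed.

Lemma unitriangular_Pimx : unitriangular (Pimx S).
Proof.
apply: unitriangular_mmul (unitriangular_lowinv unitriangular_S).
exact: unitriangular_mmul unitriangular_S (unitriangular_pascal R).
Qed.

Lemma Pimx_Pvec x n : mvmul (Pimx S) (P x) n = P (x + 1) n.
Proof.
have [S0 _] := unitriangular_S; have SB0 := upper_banded_mmul S0 (upper_banded_pascal R).
rewrite (mvmul_mmul _ _ SB0 (upper_banded_lowinv unitriangular_S)) lowinv_S_Pvec.
rewrite (mvmul_mmul _ _ S0 (upper_banded_pascal R)).
by rewrite (_ : mvmul _ (chi x) = chi (x + 1)); last exact/funext/pascal_chi.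
Qed.

Lemma lowinv_Pimx_Pvec x n : mvmul (lowinv (Pimx S)) (P x) n = P (x - 1) n.
Proof.
have [Pi0 _] := unitriangular_Pimx.
rewrite (_ : P x = mvmul (Pimx S) (P (x - 1))).
  rewrite -(mvmul_mmul _ _ (upper_banded_lowinv unitriangular_Pimx) Pi0).
  by rewrite mmul_lowinv_l ?mvmul_idm //; exact: unitriangular_Pimx.
by apply: funext => m; rewrite Pimx_Pvec subrK.
Qed.

Section ThetaJacobi.
Variable theta : {poly K}.
Local Notation ThetaJ := (mmul (lowinv (Pimx S)) (mhorner theta (Jacobi S))).

Lemma upper_banded_ThetaJ : upper_banded (size theta) ThetaJ.
Proof.
have thetaJ := upper_banded_mhorner (p := theta) upper_banded_Jacobi.
by have := upper_banded_mmul (upper_banded_lowinv unitriangular_Pimx) thetaJ; rewrite add0n.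
Qed.

Lemma ThetaJ_Pvec x n : mvmul ThetaJ (P x) n = theta.[x] * P (x - 1) n.
Proof.
have Piinv0 := upper_banded_lowinv unitriangular_Pimx.
rewrite (mvmul_mmul _ _ Piinv0 (upper_banded_mhorner (p := theta) upper_banded_Jacobi)).
rewrite (_ : mvmul _ (P x) = fun k => theta.[x] * P x k).
  by rewrite (mvmulZr _ _ _ Piinv0) lowinv_Pimx_Pvec.
by apply: funext => k; apply: mvmul_mhorner_eigen upper_banded_Jacobi (Jacobi_Pvec x) k.
Qed.

End ThetaJacobi.

Section Orthogonality.
Variables (w : nat -> K) (Hd : nat -> K).
Hypothesis hsum : forall n : nat, cvgn (series (fun k : nat => (k%:R ^+ n * `|w k|) : K)).
Hypothesis hminors : forall N : nat, \det (\matrix_(i < N, j < N) momentmx w i j) != 0.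
Hypothesis hG : momentmx w = mmul (mmul Sinv (Hmx Hd)) (mtr Sinv).

Lemma is_cvg_series_moment m : cvgn (series (fun i => (i%:R : K) ^+ m * w i)).
Proof.
by apply: (eq_is_cvg_series (is_cvg_series_poly hsum (q := 'X^m))) => i; rewrite hornerXn.
Qed.

Lemma is_cvg_series_Qvec k z : cvgn (series (fun i => P i%:R k * w i / (z - i%:R))).
Proof.
apply: (eq_is_cvg_series (is_cvg_series_poly_div hsum (q := Ppoly k) (c := z))) => i.
by rewrite horner_Ppoly.
Qed.

Lemma moment_lowinv j m N : (j < N)%N ->
  moment w (j + m) = \sum_(l < N) Sinv j l * Hd l * Sinv m l.
Proof.
move=> jN; have SH0 : upper_banded 0 (mmul Sinv (Hmx Hd)).
  by move=> n l nl; rewrite mmul_diagmr (upper_banded_lowinv unitriangular_S) ?mul0r.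
rewrite -[moment _ _]/(momentmx w j m) hG (mmul_banded _ _ SH0 (N := N)) ?addn0 //.
by apply: eq_bigr => l _; rewrite mmul_diagmr.
Qed.

Lemma Pvec_orthogonal_monomial k m :
  csum (fun i => P i%:R k * i%:R ^+ m * w i) = Hd k * Sinv m k.
Proof.
set N := (maxn k m).+1; have kN : (k < N)%N by rewrite ltnS leq_maxl.
transitivity (\sum_(j < N) S k j * moment w (j + m)).
  rewrite /moment -(@csum_lincomb _ _ (S k) (fun j i => i%:R ^+ (j + m) * w i)) => [|j _].
    2: exact: is_cvg_series_moment.
  congr csum; apply: funext => i; rewrite (Pvec_sum _ kN) !mulr_suml.
  by apply: eq_bigr => j _; rewrite exprD !mulrA.
under eq_bigr => j _ do rewrite (moment_lowinv m (ltn_ord j)) mulr_sumr.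
rewrite exchange_big /= -(sum_ord_delta (fun l => Hd l * Sinv m l) kN).
apply: eq_bigr => l _; rewrite -(lowinv_mulr unitriangular_S kN (ltn_ord l)) mulr_suml.
by apply: eq_bigr => j _; rewrite !mulrA.
Qed.

Lemma Pvec_orthogonal k (q : {poly K}) :
  csum (fun i => P i%:R k * q.[i%:R] * w i) = Hd k * coordP q k.
Proof.
transitivity (csum (fun i => \sum_(m < size q) q`_m * (P i%:R k * i%:R ^+ m * w i))).
  congr csum; apply: funext => i; rewrite horner_coef mulr_sumr mulr_suml.
  by apply: eq_bigr => m _; rewrite mulrCA !mulrA.
rewrite (@csum_lincomb _ _ (fun m => q`_m) (fun m i => P i%:R k * i%:R ^+ m * w i)) => [|m _].
  rewrite /coordP mulr_sumr; apply: eq_bigr => m _.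
  by rewrite Pvec_orthogonal_monomial mulrCA.
apply: (eq_is_cvg_series (is_cvg_series_poly hsum (q := Ppoly k * 'X^m))) => i.
by rewrite hornerM hornerXn horner_Ppoly.
Qed.

Lemma Hd_neq0 k : Hd k != 0.
Proof.
pose M : 'M[K]_k.+1 := trunc k.+1 Sinv.
have momentE :
    \matrix_(i < k.+1, j < k.+1) momentmx w i j = M *m diag_mx (\row_i Hd i) *m M^T.
  apply/matrixP => i j; rewrite !mxE /momentmx (moment_lowinv j (ltn_ord i)).
  by apply: eq_bigr => l _; rewrite mul_mx_diag !mxE.
have detM : \det M = 1.
  have [Sinv0 Sinv1] := unitriangular_lowinv unitriangular_S.
  rewrite det_trig => [|]; first by rewrite big1 // => i _; rewrite mxE Sinv1.
  by apply/is_trig_mxP => i j ij; rewrite mxE Sinv0 // addn0.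
have := hminors k.+1; rewrite momentE !det_mulmx det_tr detM mul1r mulr1 det_diag.
by rewrite big_ord_recr /= mxE; apply: contra => /eqP ->; rewrite mulr0.
Qed.

Lemma mvmul_Qvec b A z n : upper_banded b A ->
  mvmul A (Qvec w S z) n = csum (fun i => mvmul A (P i%:R) n * w i / (z - i%:R)).
Proof.
move=> Ab; set N := (n + b).+1.
rewrite (mvmul_banded _ Ab (N := N)) //.
rewrite -(@csum_lincomb _ _ (A n) (fun k i => P i%:R k * w i / (z - i%:R))) => [|k _].
  2: exact: is_cvg_series_Qvec.
congr csum; apply: funext => i; rewrite (mvmul_banded _ Ab (N := N)) // !mulr_suml.
by apply: eq_bigr => k _; rewrite !mulrA.
Qed.

Lemma Qvec_divided_difference (p : {poly K}) z n :
  p.[z] * Qvec w S z n - csum (fun i => p.[i%:R] * P i%:R n * w i / (z - i%:R)) =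
  csum (fun i => P i%:R n * ((p.[z] - p.[i%:R]) / (z - i%:R)) * w i).
Proof.
have cvgpQ : cvgn (series (fun i => p.[i%:R] * P i%:R n * w i / (z - i%:R))).
  apply: (eq_is_cvg_series (is_cvg_series_poly_div hsum (q := p * Ppoly n) (c := z))) => i.
  by rewrite hornerM horner_Ppoly.
rewrite /Qvec -csumZ; last exact: is_cvg_series_Qvec.
have cvgQ := is_cvg_series_Qvec (k := n) (z := z).
rewrite -csumB; [|exact: (is_cvg_seriesZ (k := p.[z]) cvgQ) | exact: cvgpQ].
congr csum; apply: funext => i.
by move: (P i%:R n) (w i) (z - i%:R)^-1 => a b c; ring.
Qed.

Section Pearson.
Variables theta sigma : {poly K}.
Hypothesis hpearson : forall k : nat, theta.[k.+1%:R] * w k.+1 = sigma.[k%:R] * w k.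
Hypothesis htheta0 : theta.[0] = 0.

Lemma pearson_shift (F : K -> K) :
  cvgn (series (fun i => sigma.[i%:R] * w i * F (i%:R + 1))) ->
  csum (fun i => theta.[i%:R] * w i * F i%:R) =
  csum (fun i => sigma.[i%:R] * w i * F (i%:R + 1)).
Proof.
have shift : (fun i => theta.[i.+1%:R] * w i.+1 * F i.+1%:R) =
    (fun i => sigma.[i%:R] * w i * F (i%:R + 1)).
  by apply: funext => i; rewrite hpearson mulrSr.
move=> cvgS; rewrite csumS; last by rewrite shift.
by rewrite shift mulr0n htheta0 !mul0r add0r.
Qed.

Definition Psi_poly n : {poly K} := sigma * (Ppoly n \Po ('X + 1)).

Lemma horner_Psi_poly n x : (Psi_poly n).[x] = sigma.[x] * P (x + 1) n.
Proof. by rewrite hornerM horner_comp hornerD hornerX hornerC horner_Ppoly. Qed.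

Lemma size_Psi_poly n : (size (Psi_poly n) <= size sigma + n)%N.
Proof.
apply: leq_trans (size_polyMleq _ _) _; rewrite size_comp_poly2 ?size_XaddC //.
by rewrite -subn1 leq_subLR add1n -addnS leq_add2l size_Ppoly.
Qed.

Local Notation ThetaJ := (mmul (lowinv (Pimx S)) (mhorner theta (Jacobi S))).

Lemma Psi_Hinv : mmul (Psi S Hd theta) (Hinvmx Hd) = ThetaJ.
Proof.
apply: funext => k; apply: funext => n.
by rewrite /Hinvmx mmul_diagmr /Psi /Hmx mmul_diagmr mulfK ?Hd_neq0.
Qed.

Lemma ThetaJ_mulHd k n :
  ThetaJ k n * Hd n = csum (fun i => theta.[i%:R] * w i * (P (i%:R - 1) k * P i%:R n)).
Proof.
set N := (k + size theta + n).+1.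
have kN : (k + size theta < N)%N by rewrite ltnS leq_addr.
have nN : (n < N)%N by rewrite ltnS leq_addl.
rewrite -(sum_ord_delta (fun l => ThetaJ k l * Hd l) nN).
transitivity (\sum_(l < N) ThetaJ k l * csum (fun i => P i%:R l * (Ppoly n).[i%:R] * w i)).
  by apply: eq_bigr => l _; rewrite Pvec_orthogonal coordP_Ppoly mulrC -mulrA.
rewrite -(@csum_lincomb _ _ (ThetaJ k) (fun l i => P i%:R l * (Ppoly n).[i%:R] * w i)).
  congr csum; apply: funext => i; rewrite horner_Ppoly.
  transitivity (mvmul ThetaJ (P i%:R) k * P i%:R n * w i).
    rewrite (mvmul_banded _ (upper_banded_ThetaJ (theta := theta)) kN) !mulr_suml.
    by apply: eq_bigr => l _; rewrite !mulrA.
  (* [ring] only after generalizing the atoms: it compares atoms up to conversion, which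
     would unfold the series hidden in [P]. *)
  by rewrite ThetaJ_Pvec; move: theta.[_] (P _ k) (P _ n) (w i) => a b c d; ring.
move=> l _; apply: (eq_is_cvg_series (is_cvg_series_poly hsum (q := Ppoly l * Ppoly n))) => i.
by rewrite hornerM !horner_Ppoly.
Qed.

Lemma PsiE k n : Psi S Hd theta k n = Hd k * coordP (Psi_poly n) k.
Proof.
rewrite -Pvec_orthogonal /Psi /Hmx mmul_diagmr ThetaJ_mulHd.
rewrite (pearson_shift (F := fun x => P (x - 1) k * P x n)).
  congr csum; apply: funext => i; rewrite addrK horner_Psi_poly.
  by move: sigma.[_] (w i) (P _ k) (P _ n) => a b c d; ring.
apply: (eq_is_cvg_series (is_cvg_series_poly hsum (q := Psi_poly n * Ppoly k))) => i.
rewrite hornerM horner_Psi_poly horner_Ppoly addrK.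
by move: sigma.[_] (w i) (P _ k) (P _ n) => a b c d; ring.
Qed.

Local Notation PsiTHinv := (mmul (mtr (Psi S Hd theta)) (Hinvmx Hd)).

Lemma PsiT_HinvE n k : PsiTHinv n k = coordP (Psi_poly n) k.
Proof. by rewrite /Hinvmx mmul_diagmr /mtr PsiE mulrC mulKf ?Hd_neq0. Qed.

Lemma upper_banded_PsiT_Hinv : upper_banded (size sigma) PsiTHinv.
Proof.
move=> n k nk; rewrite PsiT_HinvE coordP_eq0 //.
by rewrite (leq_trans (size_Psi_poly n)) // addnC ltnW.
Qed.

Lemma PsiT_Hinv_Pvec x n : mvmul PsiTHinv (P x) n = sigma.[x] * P (x + 1) n.
Proof.
set N := (n + size sigma).+1.
rewrite -horner_Psi_poly (horner_coordP x (N := N)).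
  2: by rewrite (leq_trans (size_Psi_poly n)) // addnC.
rewrite (mvmul_banded _ upper_banded_PsiT_Hinv (N := N)) //.
by apply: eq_bigr => k _; rewrite PsiT_HinvE.
Qed.

Lemma theta_Qvec_identity z n :
  theta.[z] * Qvec w S z n - mvmul PsiTHinv (Qvec w S (z - 1)) n =
  csum (fun i => P i%:R n * ((theta.[z] - theta.[i%:R]) / (z - i%:R)) * w i).
Proof.
rewrite (mvmul_Qvec _ _ upper_banded_PsiT_Hinv) -Qvec_divided_difference; congr (_ - _).
transitivity (csum (fun i => sigma.[i%:R] * w i * (P (i%:R + 1) n / (z - (i%:R + 1))))).
  congr csum; apply: funext => i; rewrite PsiT_Hinv_Pvec opprD addrA addrAC.
  by move: sigma.[_] (P _ n) (w i) (_^-1) => a b c d; ring.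
rewrite -(pearson_shift (F := fun x => P x n / (z - x))).
  congr csum; apply: funext => i.
  by move: theta.[_] (P _ n) (w i) (_^-1) => a b c d; ring.
apply: (eq_is_cvg_series (is_cvg_series_poly_div hsum (q := Psi_poly n) (c := z - 1))).
move=> i.
rewrite horner_Psi_poly opprD addrA addrAC.
by move: sigma.[_] (P _ n) (w i) (_^-1) => a b c d; ring.
Qed.

Lemma sigma_Qvec_identity z n :
  sigma.[z] * Qvec w S z n
    - mvmul (mmul (Psi S Hd theta) (Hinvmx Hd)) (Qvec w S (z + 1)) n =
  csum (fun i => P i%:R n * ((sigma.[z] - sigma.[i%:R]) / (z - i%:R)) * w i).
Proof.
rewrite Psi_Hinv (mvmul_Qvec _ _ (upper_banded_ThetaJ (theta := theta))).
rewrite -Qvec_divided_difference; congr (_ - _).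
transitivity (csum (fun i => theta.[i%:R] * w i * (P (i%:R - 1) n / (z + 1 - i%:R)))).
  congr csum; apply: funext => i; rewrite ThetaJ_Pvec.
  by move: theta.[_] (P _ n) (w i) (_^-1) => a b c d; ring.
rewrite (pearson_shift (F := fun x => P (x - 1) n / (z + 1 - x))).
  congr csum; apply: funext => i; rewrite addrK opprD addrACA subrr addr0.
  by move: sigma.[_] (P _ n) (w i) (_^-1) => a b c d; ring.
apply: (eq_is_cvg_series (is_cvg_series_poly_div hsum (q := sigma * Ppoly n) (c := z))).
move=> i.
rewrite hornerM horner_Ppoly addrK opprD addrACA subrr addr0.
by move: sigma.[_] (P _ n) (w i) (_^-1) => a b c d; ring.
Qed.

End Pearson.

End Orthogonality.

End OrthogonalPolynomials.

Theorem mainTheorem7 (R : realType) (w : nat -> C R)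
  (theta sigma : {poly C R}) (S : mx R) (Hd : nat -> C R)
  (* finite absolute moments: sum_k k^n |w(k)| < oo *)
  (hsum : forall n : nat, cvgn (series (fun k : nat => (k%:R ^+ n * `|w k|) : C R)))
  (* all leading principal minors of the moment matrix are nonzero *)
  (hminors : forall N : nat,
     \det (\matrix_(i < N, j < N) momentmx w i j) != 0)
  (* G = S^{-1} H S^{-T}, S lower unitriangular, H = diag(H_0, H_1, ...) *)
  (hSdiag : forall n : nat, S n n = 1)
  (hSlow : forall n m : nat, (n < m)%N -> S n m = 0)
  (hG : momentmx w = mmul (mmul (lowinv S) (Hmx Hd)) (mtr (lowinv S)))
  (* discrete Pearson equation, theta(0) = 0 *)
  (hpearson : forall k : nat,
     theta.[k.+1%:R] * w k.+1 = sigma.[k%:R] * w k)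
  (htheta0 : theta.[0] = 0) :
  forall z : C R, (forall k : int, z != k%:~R) ->
  (forall n : nat,
     theta.[z] * Qvec w S z n
     - mvmul (mmul (mtr (Psi S Hd theta)) (Hinvmx Hd)) (Qvec w S (z - 1)) n
     = csum (fun k : nat =>
         Pvec S k%:R n * ((theta.[z] - theta.[k%:R]) / (z - k%:R)) * w k))
  /\
  (forall n : nat,
     sigma.[z] * Qvec w S z n
     - mvmul (mmul (Psi S Hd theta) (Hinvmx Hd)) (Qvec w S (z + 1)) n
     = csum (fun k : nat =>
         Pvec S k%:R n * ((sigma.[z] - sigma.[k%:R]) / (z - k%:R)) * w k)).
Proof.
(* The poles are not excluded: with x / 0 = 0 both identities hold for every z. *)
move=> z _; split=> n.
- exact (theta_Qvec_identity hSdiag hSlow hsum hminors hG hpearson htheta0 z n).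
- exact (sigma_Qvec_identity hSdiag hSlow hsum hminors hG hpearson htheta0 z n).
Qed.
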